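(* Let $d\ge1$, $s_1\ge0$, $s_2\le0$, $\alpha>0$ and $g\in L^2(\mathbb{T}^d;\mathbb{C})$. For $\beta>0$ let $(u_\beta,v_\beta)$ be the unique minimizer over $H^{s_1}_0(\mathbb{T}^d;\mathbb{C})\times(\dot H^{s_2}(\mathbb{T}^d;\mathbb{C})\cap L^2_0(\mathbb{T}^d;\mathbb{C}))$ of $$I_\beta(u,v)=\frac12\|(-\Delta)^{s_1/2}u\|^2+\frac\alpha2\|u+v-g\|^2+\frac\beta2\|R_{s_2/2}(v)\|^2.$$ Let $(\beta_n)$ be an increasing positive sequence with $\beta_n\to\infty$. Then the sequence $(u_{\beta_n},v_{\beta_n})$ is bounded, and a subsequence converges weakly to $(u_0,0)$, where $u_0$ is a minimizer over $H^{s_1}_0(\mathbb{T}^d;\mathbb{C})$ of $$E(u)=\frac12\|(-\Delta)^{s_1/2}u\|^2+\frac\alpha2\|u-g\|^2.$$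
   Context: $\mathbb{T}^d=\mathbb{R}^d/(2\pi\mathbb{Z})^d$, $\|\cdot\|$ is the $L^2(\mathbb{T}^d;\mathbb{C})$ norm, $L^2_0$ the zero-mean subspace, $\hat u_k=\int_{\mathbb{T}^d}u\,e^{-ik\cdot x}dx$. $(-\Delta)^\sigma u=(2\pi)^{-d}\sum_k|k|^{2\sigma}\hat u_ke^{ik\cdot x}$; for $\sigma\le0$, $R_\sigma(u)=(2\pi)^{-d}\sum_{k\ne0}|k|^{2\sigma}\hat u_ke^{ik\cdot x}$. For $\sigma\ge0$, $H^\sigma_0=\{u\in L^2_0:\sum_{k\ne0}|k|^{2\sigma}|\hat u_k|^2<\infty\}$; for $\sigma<0$, $\dot H^\sigma$ is the completion of $L^2_0$ w.r.t. $(\sum_{k\ne0}|k|^{2\sigma}|\hat u_k|^2)^{1/2}$. Weak convergence is in $H^{s_1}_0$ for the first component and in $\dot H^{s_2}\cap L^2_0$ (weakly in $L^2$) for the second. *)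

(* Periodic functions on T^d are represented by
   their Fourier coefficient families  k |-> \hat u_k,  k in Z^d. *)
From HB Require Import structures.
From mathcomp Require Import all_boot all_order all_algebra.
From mathcomp Require Import all_classical all_reals all_analysis.
From mathcomp Require Import complex.
Set Implicit Arguments. Unset Strict Implicit. Unset Printing Implicit Defensive.
Import Order.TTheory GRing.Theory Num.Theory.
Local Open Scope ring_scope.
Local Open Scope classical_set_scope.
Import numFieldNormedType.Exports.

Section TorusDefs.
Variable R : realType.
Variable d : nat.

Definition freq := 'rV[int]_d.

Definition fsq (k : freq) : R := \sum_(i < d) ((k ord0 i)%:~R) ^+ 2.

Definition coef := freq -> R[i].

Definition cabs2 (z : R[i]) : R := complex.Re z ^+ 2 + complex.Im z ^+ 2.

Definition torus_c : R := ((2 * pi) ^+ d)^-1.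

(* ||u||^2 = (2pi)^{-d} sum_k |\hat u_k|^2  (Parseval) *)
Definition sqnormL2 (u : coef) : \bar R :=
  (torus_c%:E * \esum_(k in [set: freq]) (cabs2 (u k))%:E)%E.

Definition in_L2 (u : coef) : Prop := (sqnormL2 u < +oo)%E.

Definition mean_zero (u : coef) : Prop := u 0 = 0.

Definition sobsq (sigma : R) (u : coef) : \bar R :=
  \esum_(k in [set k : freq | k != 0]) ((fsq k `^ sigma) * cabs2 (u k))%:E.

Definition H0 (sigma : R) (u : coef) : Prop :=
  [/\ in_L2 u, mean_zero u & (sobsq sigma u < +oo)%E].

Definition Hdot_L20 (sigma : R) (v : coef) : Prop :=
  [/\ in_L2 v, mean_zero v & (sobsq sigma v < +oo)%E].

Definition fraclap (sigma : R) (u : coef) : coef :=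
  fun k => ((fsq k `^ sigma)%:C)%C * u k.

Definition Rop (sigma : R) (v : coef) : coef :=
  fun k => if k == 0 then 0 else ((fsq k `^ sigma)%:C)%C * v k.

Definition Ibeta (s1 s2 alpha beta : R) (g u v : coef) : \bar R :=
  ((2^-1)%:E * sqnormL2 (fraclap (s1 / 2) u)
   + (alpha / 2)%:E * sqnormL2 (fun k => (u k + v k - g k)%R)
   + (beta / 2)%:E * sqnormL2 (Rop (s2 / 2) v))%E.

Definition Efun (s1 alpha : R) (g u : coef) : \bar R :=
  ((2^-1)%:E * sqnormL2 (fraclap (s1 / 2) u)
   + (alpha / 2)%:E * sqnormL2 (fun k => (u k - g k)%R))%E.

Definition minimizes_I (s1 s2 alpha beta : R) (g u v : coef) : Prop :=
  [/\ H0 s1 u, Hdot_L20 s2 v &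
    forall u' v', H0 s1 u' -> Hdot_L20 s2 v' ->
      (Ibeta s1 s2 alpha beta g u v <= Ibeta s1 s2 alpha beta g u' v')%E].

Definition minimizes_E (s1 alpha : R) (g u : coef) : Prop :=
  H0 s1 u /\
  forall u', H0 s1 u' -> (Efun s1 alpha g u <= Efun s1 alpha g u')%E.

Definition rsum (f : freq -> R) : R :=
  fine (\esum_(k in [set: freq]) (Num.max (f k) 0)%:E)
  - fine (\esum_(k in [set: freq]) (Num.max (- f k) 0)%:E).

Definition csum (w : freq -> R[i]) : R[i] :=
  (rsum (fun k => complex.Re (w k)) +i* rsum (fun k => complex.Im (w k)))%C.

Definition innerL2 (u w : coef) : R[i] :=
  (torus_c%:C)%C * csum (fun k => u k * (w k)^*%C).

Definition innerH (sigma : R) (u w : coef) : R[i] :=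
  csum (fun k => if k == 0 then 0 else ((fsq k `^ sigma)%:C)%C * (u k * (w k)^*%C)).

Definition ccvg (z : nat -> R[i]) (l : R[i]) : Prop :=
  (fun n => complex.Re (z n)) @ \oo --> complex.Re l /\
  (fun n => complex.Im (z n)) @ \oo --> complex.Im l.

Definition weak_H0 (sigma : R) (u : nat -> coef) (l : coef) : Prop :=
  forall w, H0 sigma w -> ccvg (fun n => innerH sigma (u n) w) (innerH sigma l w).

Definition weak_L20 (v : nat -> coef) (l : coef) : Prop :=
  forall w, in_L2 w -> mean_zero w -> ccvg (fun n => innerL2 (v n) w) (innerL2 l w).

End TorusDefs.

(* Everything is diagonal in the Fourier coefficients.  For k <> 0 put a = |k|^(2 s1) and
   b = |k|^(2 s2); mode k contributes (2 pi)^-d times the quadratic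
     a |x|^2 / 2 + alpha |x + y - g_k|^2 / 2 + beta b |y|^2 / 2,
   which is strictly convex with unique minimizer x = T_beta g_k, y = S_beta g_k for explicit
   real multipliers.  Hence the minimizer of I_beta is this pair.  As beta grows, T_beta
   increases to alpha / (a + alpha), the multiplier of the minimizer of E, and S_beta decreases
   to 0; the bounds T_beta <= 1, a T_beta^2 <= alpha, S_beta <= 1 and b <= 1 make the norms
   uniformly bounded.  Tested against w, the inner products are series sum_k T_beta(k) z_k, and
   monotone convergence, dominated by |k|^(2 s1) |w_k|^2 + alpha |g_k|^2 (resp. |w_k|^2 + |g_k|^2),
   gives weak convergence of the whole sequence, so the subsequence is the identity. *)

From mathcomp Require Import all_boot all_order all_algebra.
From mathcomp Require Import all_classical all_reals all_analysis.
From mathcomp Require Import complex.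
From mathcomp Require Import finmap ring lra.
Set Implicit Arguments.
Unset Strict Implicit.
Unset Printing Implicit Defensive.

Import Order.TTheory GRing.Theory Num.Theory.
Local Open Scope ring_scope.
Local Open Scope classical_set_scope.
Import numFieldNormedType.Exports.

Section esum_real.
Variables (R : realType) (T : choiceType).
Local Open Scope ereal_scope.

Lemma esum_EFin_ge0 (I : set T) (f : T -> R) :
  (forall i, 0 <= f i)%R -> 0 <= \esum_(i in I) (f i)%:E.
Proof. by move=> f0; apply: esum_ge0 => i _; rewrite lee_fin. Qed.

Lemma esumZl (I : set T) (x : R) (f : T -> R) : (0 <= x)%R ->
  (forall i, 0 <= f i)%R ->
  \esum_(i in I) (x * f i)%:E = x%:E * \esum_(i in I) (f i)%:E.
Proof.
move=> x0 f0; rewrite /esum -ereal_supZl//; last first.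
  by apply/set0P; exists 0; exists set0; [exact: fsets_set0|rewrite fsbig_set0].
have sumZ A : fsets I A -> \sum_(i \in A) (x * f i)%:E = x%:E * \sum_(i \in A) (f i)%:E.
  by move=> [finA _]; rewrite !fsbig_finite// ge0_sume_distrr// => i _; rewrite lee_fin.
congr ereal_sup; apply/seteqP; split => y.
  by move=> [A IA <-]; exists (\sum_(i \in A) (f i)%:E); [exists A|rewrite sumZ].
by move=> [z [A IA <-] <-]; exists A => //; rewrite sumZ.
Qed.

Lemma esum_EFinD (I : set T) (f g : T -> R) :
  (forall i, 0 <= f i)%R -> (forall i, 0 <= g i)%R ->
  \esum_(i in I) (f i + g i)%:E = \esum_(i in I) (f i)%:E + \esum_(i in I) (g i)%:E.
Proof.
move=> f0 g0; transitivity (\esum_(i in I) ((f i)%:E + (g i)%:E)).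
  by apply: eq_esum => i _; rewrite EFinD.
by rewrite esumD// => i _; rewrite lee_fin.
Qed.

Lemma esum_EFin_lty_le (I : set T) (f g : T -> R) :
  (forall i, I i -> 0 <= f i <= g i)%R ->
  \esum_(i in I) (g i)%:E < +oo -> \esum_(i in I) (f i)%:E < +oo.
Proof.
move=> fg; apply: le_lt_trans; apply: le_esum => i /fg /andP[_].
by rewrite lee_fin.
Qed.

Lemma esum_EFin_fineK (I : set T) (f : T -> R) : (forall i, 0 <= f i)%R ->
  \esum_(i in I) (f i)%:E < +oo ->
  (fine (\esum_(i in I) (f i)%:E))%:E = \esum_(i in I) (f i)%:E.
Proof. by move=> f0 fin; rewrite fineK// ge0_fin_numE// esum_EFin_ge0. Qed.

Lemma esum_EFin_le_eq (f g : T -> R) : (forall i, 0 <= g i <= f i)%R ->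
  \esum_(i in [set: T]) (f i)%:E <= \esum_(i in [set: T]) (g i)%:E ->
  \esum_(i in [set: T]) (g i)%:E < +oo -> forall i, f i = g i.
Proof.
move=> gf fg gfin i.
have g0 j : (0 <= g j)%R by case/andP: (gf j).
have fg0 j : (0 <= f j - g j)%R by case/andP: (gf j) => _; rewrite subr_ge0.
have fE : \esum_(j in [set: T]) (f j)%:E =
    \esum_(j in [set: T]) (f j - g j)%:E + \esum_(j in [set: T]) (g j)%:E.
  by rewrite -esum_EFinD//; apply: eq_esum => j _; rewrite subrK.
have gfin' : \esum_(j in [set: T]) (g j)%:E \is a fin_num.
  by rewrite ge0_fin_numE// esum_EFin_ge0.
have : \esum_(j in [set: T]) (f j - g j)%:E <= 0.
  by rewrite -(leeD2rE _ _ gfin') add0e -fE.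
have : (f i - g i)%:E <= \esum_(j in [set: T]) (f j - g j)%:E.
  by apply: esum_ge; exists [set i]; [split => //; exact: finite_set1|rewrite fsbig_set1].
move=> /le_trans/[apply]; rewrite lee_fin => fgi.
by apply/eqP; rewrite -subr_eq0 eq_le fgi fg0.
Qed.

Lemma esum_nondecreasing_cvg (I : set T) (f : nat -> T -> \bar R) (l : T -> \bar R) :
  (forall n i, I i -> 0 <= f n i) -> (forall i, I i -> nondecreasing_seq (f ^~ i)) ->
  (forall i, I i -> f ^~ i @ \oo --> l i) ->
  \esum_(i in I) f n i @[n --> \oo] --> \esum_(i in I) l i.
Proof.
move=> f0 f_nd fl.
have fle n i : I i -> f n i <= l i.
  by move=> Ii; apply: (cvge_ge _ (fl i Ii)); exists n => // m /= nm; exact: f_nd.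
set E := fun n => \esum_(i in I) f n i.
have E_nd : nondecreasing_seq E by move=> m n mn; apply: le_esum => i Ii; exact: f_nd.
suff -> : \esum_(i in I) l i = ereal_sup (range E) by exact: ereal_nondecreasing_cvgn.
apply/le_anti/andP; split; last first.
  by apply: ub_ereal_sup => _ [n _ <-]; apply: le_esum => i Ii; exact: fle.
apply: ub_ereal_sup => _ [X [finX XI] <-]; rewrite fsbig_finite// big_seq.
have XI' j : j \in fset_set X -> I j.
  by rewrite in_fset_set// => /set_mem/XI.
have sumX_le n : \sum_(j <- fset_set X | j \in fset_set X) f n j <= ereal_sup (range E).
  apply: (@le_trans _ _ (E n)); last by apply: ereal_sup_ubound; exists n.
  by apply: esum_ge; exists X => //; rewrite fsbig_finite// big_seq.
apply: (@cvge_le _ \oo eventually_filter _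
  (fun n => \sum_(j <- fset_set X | j \in fset_set X) f n j)); first exact: nearW.
by apply: cvg_nnesum => j /XI' Ij; [apply: nearW => n; exact: f0|exact: fl].
Qed.

Lemma fine_esum_nondecreasing_cvg (f : nat -> T -> R) (l : T -> R) :
  (forall n i, 0 <= f n i)%R -> (forall i, nondecreasing_seq (f ^~ i)) ->
  (forall i, f ^~ i @ \oo --> l i) -> \esum_(i in [set: T]) (l i)%:E < +oo ->
  fine (\esum_(i in [set: T]) (f n i)%:E) @[n --> \oo] -->
  fine (\esum_(i in [set: T]) (l i)%:E).
Proof.
move=> f0 f_nd fl lfin.
have l0 i : (0 <= l i)%R by apply: (cvgr_to_ge (fl i)); exact: nearW.
apply: fine_cvg; rewrite esum_EFin_fineK//.
apply: esum_nondecreasing_cvg => [n i _|i _ m n mn|i _]; rewrite ?lee_fin.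
- exact: f0.
- exact: f_nd.
- by apply: cvg_EFin; [exact: nearW|exact: fl].
Qed.

Lemma fine_esum_complement (F h : T -> R) : (forall i, 0 <= h i <= F i)%R ->
  \esum_(i in [set: T]) (F i)%:E < +oo ->
  fine (\esum_(i in [set: T]) (h i)%:E) =
  (fine (\esum_(i in [set: T]) (F i)%:E) - fine (\esum_(i in [set: T]) (F i - h i)%:E))%R.
Proof.
move=> hF Ffin; have h0 i : (0 <= h i)%R by case/andP: (hF i).
have Fh0 i : (0 <= F i - h i)%R by case/andP: (hF i) => _; rewrite subr_ge0.
have hfin : \esum_(i in [set: T]) (h i)%:E < +oo.
  by apply: esum_EFin_lty_le Ffin => i _; exact: hF.
have Fhfin : \esum_(i in [set: T]) (F i - h i)%:E < +oo.
  apply: esum_EFin_lty_le Ffin => i _; rewrite Fh0 lerBlDr lerDl.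
  by case/andP: (hF i).
have -> : \esum_(i in [set: T]) (F i)%:E =
    \esum_(i in [set: T]) (F i - h i)%:E + \esum_(i in [set: T]) (h i)%:E.
  by rewrite -esum_EFinD//; apply: eq_esum => i _; rewrite subrK.
by rewrite fineD ?ge0_fin_numE ?esum_EFin_ge0// addrC addKr.
Qed.

Lemma fine_esum_nonincreasing_cvg (f : nat -> T -> R) (l : T -> R) :
  (forall n i, 0 <= f n i)%R -> (forall i, nonincreasing_seq (f ^~ i)) ->
  (forall i, f ^~ i @ \oo --> l i) -> \esum_(i in [set: T]) (f 0%N i)%:E < +oo ->
  fine (\esum_(i in [set: T]) (f n i)%:E) @[n --> \oo] -->
  fine (\esum_(i in [set: T]) (l i)%:E).
Proof.
move=> f0 f_ni fl f0fin.
have l0 i : (0 <= l i)%R by apply: (cvgr_to_ge (fl i)); exact: nearW.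
have l_le i : (l i <= f 0%N i)%R.
  by apply: (cvgr_to_le (fl i)); apply: nearW => n; exact: f_ni.
have fn_bnd n i : (0 <= f n i <= f 0%N i)%R by rewrite f0 f_ni.
rewrite (fine_esum_complement _ f0fin) => [|i]; last by rewrite l0 l_le.
under eq_fun do rewrite (fine_esum_complement (fn_bnd _) f0fin).
apply: cvgB; first exact: cvg_cst.
apply: fine_esum_nondecreasing_cvg => [n i|i m n mn|i|].
- by rewrite subr_ge0 f_ni.
- by rewrite lerB// f_ni.
- by apply: cvgB; [exact: cvg_cst|exact: fl].
- apply: esum_EFin_lty_le f0fin => i _; rewrite subr_ge0 l_le lerBlDr lerDl.
  exact: l0.
Qed.

End esum_real.

Section complex_square_modulus.
Variable R : realType.
Implicit Types (t : R) (z : R[i]).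

Lemma cabs2_ge0 z : 0 <= cabs2 z.
Proof. by rewrite /cabs2 addr_ge0 ?sqr_ge0. Qed.

Lemma cabs2_eq0 z : (cabs2 z == 0) = (z == 0).
Proof.
by case: z => x y; rewrite /cabs2 paddr_eq0 ?sqr_ge0// !sqrf_eq0 eq_complex.
Qed.

Lemma cabs20 : cabs2 (0 : R[i]) = 0.
Proof. by apply/eqP; rewrite cabs2_eq0. Qed.

Lemma cabs2N z : cabs2 (- z) = cabs2 z.
Proof. by case: z => x y; rewrite /cabs2 /= !sqrrN. Qed.

Lemma cabs2_scale t z : cabs2 ((t%:C)%C * z) = t ^+ 2 * cabs2 z.
Proof. by case: z => x y; rewrite /cabs2 /=; ring. Qed.

Lemma Re_scale t z : complex.Re ((t%:C)%C * z) = t * complex.Re z.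
Proof. by case: z => x y; rewrite /= mul0r subr0. Qed.

Lemma Im_scale t z : complex.Im ((t%:C)%C * z) = t * complex.Im z.
Proof. by case: z => x y; rewrite /= mul0r addr0. Qed.

Lemma ccvg_scale (c : R) (z : nat -> R[i]) (l : R[i]) :
  ccvg z l -> ccvg (fun n => (c%:C)%C * z n) ((c%:C)%C * l).
Proof.
case=> Re_cvg Im_cvg; split; rewrite ?Re_scale ?Im_scale.
  by under eq_fun do rewrite Re_scale; exact: cvgMr.
by under eq_fun do rewrite Im_scale; exact: cvgMr.
Qed.

Lemma weighted_cross_le (a C t x1 x2 y1 y2 : R) : 0 <= a -> 0 <= t ->
  a * t ^+ 2 <= C ->
  t * `|a * (x1 * y1 + x2 * y2)| <= (C * (x1 ^+ 2 + x2 ^+ 2) + a * (y1 ^+ 2 + y2 ^+ 2)) / 2.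
Proof.
move=> a0 t0 atC.
have x_ge0 : 0 <= x1 ^+ 2 + x2 ^+ 2 by rewrite addr_ge0 ?sqr_ge0.
have tx_le : a * (t ^+ 2 * (x1 ^+ 2 + x2 ^+ 2)) <= C * (x1 ^+ 2 + x2 ^+ 2).
  by rewrite mulrA ler_wpM2r.
have cross (e : R) : e ^+ 2 = 1 ->
    2 * (t * (a * (e * (x1 * y1 + x2 * y2)))) <=
    a * (t ^+ 2 * (x1 ^+ 2 + x2 ^+ 2)) + a * (y1 ^+ 2 + y2 ^+ 2).
  move=> e2; have : 0 <= a * ((t * x1 - e * y1) ^+ 2 + (t * x2 - e * y2) ^+ 2).
    by rewrite mulr_ge0// addr_ge0 ?sqr_ge0.
  have -> : a * ((t * x1 - e * y1) ^+ 2 + (t * x2 - e * y2) ^+ 2) =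
      a * (t ^+ 2 * (x1 ^+ 2 + x2 ^+ 2)) + a * (e ^+ 2 * (y1 ^+ 2 + y2 ^+ 2))
      - 2 * (t * (a * (e * (x1 * y1 + x2 * y2)))) by ring.
  by rewrite e2 mul1r subr_ge0.
have c1 := cross 1 (expr1n _ _).
have cN := cross (-1) (etrans (sqrrN 1) (expr1n _ 2)).
by rewrite -[t]ger0_norm// -normrM ler_norml; apply/andP; split; lra.
Qed.

Lemma scaled_mul_conj_le (a C t : R) (x y : R[i]) : 0 <= a -> 0 <= t ->
  a * t ^+ 2 <= C ->
  t * `|complex.Re ((a%:C)%C * (x * y^*%C))| <= (C * cabs2 x + a * cabs2 y) / 2 /\
  t * `|complex.Im ((a%:C)%C * (x * y^*%C))| <= (C * cabs2 x + a * cabs2 y) / 2.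
Proof.
move=> a0 t0 atC; rewrite Re_scale Im_scale.
case: x y => [x1 x2] [y1 y2]; rewrite /cabs2 /=; split.
  by rewrite mulrN opprK; exact: weighted_cross_le.
have := @weighted_cross_le a C t x2 (- x1) y1 y2 a0 t0 atC.
rewrite sqrrN [_ + x1 ^+ 2]addrC.
by have -> : x1 * - y2 + x2 * y1 = x2 * y1 + - x1 * y2 by ring.
Qed.

End complex_square_modulus.

Section fourier_series.
Variables (R : realType) (d : nat).
Local Notation freq := (freq d).

Lemma rsum_weighted (t r : freq -> R) : (forall k, 0 <= t k) ->
  rsum (fun k => t k * r k) =
  fine (\esum_(k in [set: freq]) (t k * Num.max (r k) 0)%:E) -
  fine (\esum_(k in [set: freq]) (t k * Num.max (- r k) 0)%:E).
Proof.
move=> t0; rewrite /rsum; congr (fine _ - fine _); apply: eq_esum => k _.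
  by rewrite maxr_pMr// mulr0.
by rewrite -mulrN maxr_pMr// mulr0.
Qed.

Let max_ge0 (x : R) : 0 <= Num.max x 0.
Proof. by rewrite le_max lexx orbT. Qed.

Let max_le_norm (x : R) : Num.max x 0 <= `|x| /\ Num.max (- x) 0 <= `|x|.
Proof. by rewrite !ge_max normr_ge0 ler_norm -normrN ler_norm. Qed.

Lemma rsum_weighted_nondecreasing_cvg (t : nat -> freq -> R) (l r : freq -> R) :
  (forall n k, 0 <= t n k) -> (forall k, nondecreasing_seq (t ^~ k)) ->
  (forall k, t ^~ k @ \oo --> l k) ->
  (\esum_(k in [set: freq]) (l k * `|r k|)%:E < +oo)%E ->
  rsum (fun k => t n k * r k) @[n --> \oo] --> rsum (fun k => l k * r k).
Proof.
move=> t0 t_nd tl lfin.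
have l0 k : 0 <= l k by apply: (cvgr_to_ge (tl k)); exact: nearW.
under eq_fun do rewrite rsum_weighted//.
rewrite rsum_weighted//.
suff cvg_part (s : freq -> R) : (forall k, Num.max (s k) 0 <= `|r k|) ->
    fine (\esum_(k in [set: freq]) (t n k * Num.max (s k) 0)%:E) @[n --> \oo] -->
    fine (\esum_(k in [set: freq]) (l k * Num.max (s k) 0)%:E).
  by apply: cvgB; apply: cvg_part => k; case: (max_le_norm (r k)).
move=> s_le; apply: fine_esum_nondecreasing_cvg => [n k|k m n mn|k|].
- by rewrite mulr_ge0 ?max_ge0.
- by rewrite ler_wpM2r ?max_ge0 ?t_nd.
- exact: cvgMl (tl k).
- by apply: esum_EFin_lty_le lfin => k _; rewrite mulr_ge0 ?max_ge0//= ler_wpM2l.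
Qed.

Lemma rsum_weighted_nonincreasing_cvg (t : nat -> freq -> R) (l r : freq -> R) :
  (forall n k, 0 <= t n k) -> (forall k, nonincreasing_seq (t ^~ k)) ->
  (forall k, t ^~ k @ \oo --> l k) ->
  (\esum_(k in [set: freq]) (t 0%N k * `|r k|)%:E < +oo)%E ->
  rsum (fun k => t n k * r k) @[n --> \oo] --> rsum (fun k => l k * r k).
Proof.
move=> t0 t_ni tl t0fin.
have l0 k : 0 <= l k by apply: (cvgr_to_ge (tl k)); exact: nearW.
under eq_fun do rewrite rsum_weighted//.
rewrite rsum_weighted//.
suff cvg_part (s : freq -> R) : (forall k, Num.max (s k) 0 <= `|r k|) ->
    fine (\esum_(k in [set: freq]) (t n k * Num.max (s k) 0)%:E) @[n --> \oo] -->
    fine (\esum_(k in [set: freq]) (l k * Num.max (s k) 0)%:E).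
  by apply: cvgB; apply: cvg_part => k; case: (max_le_norm (r k)).
move=> s_le; apply: fine_esum_nonincreasing_cvg => [n k|k m n mn|k|].
- by rewrite mulr_ge0 ?max_ge0.
- by rewrite ler_wpM2r ?max_ge0 ?t_ni.
- exact: cvgMl (tl k).
- by apply: esum_EFin_lty_le t0fin => k _; rewrite mulr_ge0 ?max_ge0//= ler_wpM2l.
Qed.

Lemma Re_csum_scale (u : freq -> R) (z : freq -> R[i]) :
  complex.Re (csum (fun k => ((u k)%:C)%C * z k)) = rsum (fun k => u k * complex.Re (z k)).
Proof. by rewrite /csum /=; congr rsum; apply: funext => k; exact: Re_scale. Qed.

Lemma Im_csum_scale (u : freq -> R) (z : freq -> R[i]) :
  complex.Im (csum (fun k => ((u k)%:C)%C * z k)) = rsum (fun k => u k * complex.Im (z k)).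
Proof. by rewrite /csum /=; congr rsum; apply: funext => k; exact: Im_scale. Qed.

Lemma csum_weighted_nondecreasing_ccvg (t : nat -> freq -> R) (l : freq -> R)
    (z : freq -> R[i]) :
  (forall n k, 0 <= t n k) -> (forall k, nondecreasing_seq (t ^~ k)) ->
  (forall k, t ^~ k @ \oo --> l k) ->
  (\esum_(k in [set: freq]) (l k * `|complex.Re (z k)|)%:E < +oo)%E ->
  (\esum_(k in [set: freq]) (l k * `|complex.Im (z k)|)%:E < +oo)%E ->
  ccvg (fun n => csum (fun k => ((t n k)%:C)%C * z k)) (csum (fun k => ((l k)%:C)%C * z k)).
Proof.
move=> t0 t_mono tl Re_fin Im_fin; split.
  by under eq_fun do rewrite Re_csum_scale; rewrite Re_csum_scale; exact: rsum_weighted_nondecreasing_cvg.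
by under eq_fun do rewrite Im_csum_scale; rewrite Im_csum_scale; exact: rsum_weighted_nondecreasing_cvg.
Qed.

Lemma csum_weighted_nonincreasing_ccvg (t : nat -> freq -> R) (l : freq -> R)
    (z : freq -> R[i]) :
  (forall n k, 0 <= t n k) -> (forall k, nonincreasing_seq (t ^~ k)) ->
  (forall k, t ^~ k @ \oo --> l k) ->
  (\esum_(k in [set: freq]) (t 0%N k * `|complex.Re (z k)|)%:E < +oo)%E ->
  (\esum_(k in [set: freq]) (t 0%N k * `|complex.Im (z k)|)%:E < +oo)%E ->
  ccvg (fun n => csum (fun k => ((t n k)%:C)%C * z k)) (csum (fun k => ((l k)%:C)%C * z k)).
Proof.
move=> t0 t_mono tl Re_fin Im_fin; split.
  by under eq_fun do rewrite Re_csum_scale; rewrite Re_csum_scale; exact: rsum_weighted_nonincreasing_cvg.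
by under eq_fun do rewrite Im_csum_scale; rewrite Im_csum_scale; exact: rsum_weighted_nonincreasing_cvg.
Qed.

End fourier_series.

Section mode_weights.
Variable R : realFieldType.
Implicit Types (a b al beta : R).

(* Multipliers of the minimizer of [mode_cost] below; stationarity reads
   a x = beta b y = al (g - x - y). *)
Definition mode_den a b al beta := a * beta * b + al * beta * b + al * a.
Definition uweight a b al beta := al * beta * b / mode_den a b al beta.
Definition vweight a b al beta := al * a / mode_den a b al beta.
Definition uweight_lim a al := al / (a + al).

Variables (a b al : R).
Hypotheses (a_gt0 : 0 < a) (b_gt0 : 0 < b) (al_gt0 : 0 < al).

Lemma mode_den_gt0 beta : 0 < beta -> 0 < mode_den a b al beta.
Proof. by move=> beta_gt0; rewrite /mode_den !addr_gt0 ?mulr_gt0. Qed.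

Lemma uweight_bounds beta : 0 < beta ->
  [/\ 0 <= uweight a b al beta, uweight a b al beta <= 1
    & a * uweight a b al beta ^+ 2 <= al].
Proof.
move=> beta_gt0; have D_gt0 := mode_den_gt0 beta_gt0; rewrite /uweight.
have num_gt0 : 0 < al * beta * b by rewrite !mulr_gt0.
have p_gt0 : 0 < beta * b by rewrite mulr_gt0.
have den_ge : beta * b * (a + al) <= mode_den a b al beta.
  by rewrite /mode_den; have := mulr_gt0 al_gt0 a_gt0; nra.
split; first by rewrite divr_ge0 ?ltW.
  by rewrite ler_pdivrMr// mul1r; apply: le_trans den_ge; have := mulr_gt0 a_gt0 p_gt0; lra.
rewrite expr_div_n mulrA ler_pdivrMr ?exprn_gt0//.
have am_gm : a * al <= (a + al) ^+ 2 by nra.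
have : (beta * b * (a + al)) ^+ 2 <= mode_den a b al beta ^+ 2.
  have : 0 <= beta * b * (a + al) by rewrite mulr_ge0 ?addr_ge0 ?ltW.
  by nra.
have : a * al * (beta * b) ^+ 2 <= (beta * b * (a + al)) ^+ 2.
  by rewrite [X in _ <= X]exprMn mulrC ler_wpM2l ?sqr_ge0.
by nra.
Qed.

Lemma vweight_bounds beta : 0 < beta -> 0 <= vweight a b al beta <= 1.
Proof.
move=> beta_gt0; have D_gt0 := mode_den_gt0 beta_gt0.
apply/andP; split; first by rewrite divr_ge0 ?mulr_ge0 ?ltW.
rewrite ler_pdivrMr// mul1r /mode_den.
have := mulr_gt0 (mulr_gt0 a_gt0 beta_gt0) b_gt0.
by have := mulr_gt0 (mulr_gt0 al_gt0 beta_gt0) b_gt0; lra.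
Qed.

Lemma uweight_lim_bounds :
  [/\ 0 <= uweight_lim a al, uweight_lim a al <= 1 & a * uweight_lim a al ^+ 2 <= al].
Proof.
have s_gt0 : 0 < a + al by rewrite addr_gt0.
rewrite /uweight_lim; split; first by rewrite divr_ge0 ?ltW.
  by rewrite ler_pdivrMr// mul1r lerDr ltW.
rewrite expr_div_n mulrA ler_pdivrMr ?exprn_gt0//.
by have := mulr_gt0 a_gt0 al_gt0; nra.
Qed.

Lemma uweight_nondecreasing beta beta' : 0 < beta -> beta <= beta' ->
  uweight a b al beta <= uweight a b al beta'.
Proof.
move=> beta_gt0 le_beta; have beta'_gt0 := lt_le_trans beta_gt0 le_beta.
have D_gt0 := mode_den_gt0 beta_gt0; have D'_gt0 := mode_den_gt0 beta'_gt0.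
rewrite -subr_ge0 (_ : uweight a b al beta' - uweight a b al beta =
    al * al * a * b * (beta' - beta) / (mode_den a b al beta * mode_den a b al beta')).
  apply: divr_ge0; last exact: mulr_ge0 (ltW D_gt0) (ltW D'_gt0).
  by repeat apply: mulr_ge0; rewrite ?subr_ge0 // ltW.
by rewrite /uweight /mode_den; field; rewrite !lt0r_neq0.
Qed.

Lemma vweight_nonincreasing beta beta' : 0 < beta -> beta <= beta' ->
  vweight a b al beta' <= vweight a b al beta.
Proof.
move=> beta_gt0 le_beta; have beta'_gt0 := lt_le_trans beta_gt0 le_beta.
have D_gt0 := mode_den_gt0 beta_gt0; have D'_gt0 := mode_den_gt0 beta'_gt0.
rewrite -subr_ge0 (_ : vweight a b al beta - vweight a b al beta' =
    al * a * (a + al) * b * (beta' - beta) / (mode_den a b al beta * mode_den a b al beta')).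
  apply: divr_ge0; last exact: mulr_ge0 (ltW D_gt0) (ltW D'_gt0).
  by repeat apply: mulr_ge0; rewrite ?subr_ge0 ?addr_ge0 // ltW.
by rewrite /vweight /mode_den; field; rewrite !lt0r_neq0.
Qed.

Lemma uweight_cvg (beta : nat -> R) : (forall n, 0 < beta n) ->
  beta @ \oo --> +oo -> uweight a b al (beta n) @[n --> \oo] --> uweight_lim a al.
Proof.
move=> beta_gt0 beta_cvg.
have inv_cvg : (beta n)^-1 @[n --> \oo] --> 0 by apply/gtr0_cvgV0 => //; exact: nearW.
pose den x := a * b + al * b + al * a * x.
have den0_neq0 : den 0 != 0 by rewrite /den mulr0 addr0 lt0r_neq0 ?addr_gt0 ?mulr_gt0.
have uE n : uweight a b al (beta n) = al * b * (den (beta n)^-1)^-1.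
  have := beta_gt0 n; have := mode_den_gt0 (beta_gt0 n).
  by rewrite /uweight /den /mode_den => D_gt0 bn_gt0; field; rewrite gt_eqF//= lt0r_neq0//; lra.
have -> : uweight_lim a al = al * b * (den 0)^-1.
  by rewrite /uweight_lim /den; field; rewrite !gt_eqF ?addr_gt0 ?mulr_gt0.
under eq_fun do rewrite uE.
apply: cvgMr; apply: cvgV => //; apply: cvgD; first exact: cvg_cst.
exact: cvgMr.
Qed.

Lemma vweight_cvg0 (beta : nat -> R) : (forall n, 0 < beta n) ->
  beta @ \oo --> +oo -> vweight a b al (beta n) @[n --> \oo] --> 0.
Proof.
move=> beta_gt0 beta_cvg.
have inv_cvg : (beta n)^-1 @[n --> \oo] --> 0 by apply/gtr0_cvgV0 => //; exact: nearW.
pose den x := a * b + al * b + al * a * x.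
have den0_neq0 : den 0 != 0 by rewrite /den mulr0 addr0 lt0r_neq0 ?addr_gt0 ?mulr_gt0.
have vE n : vweight a b al (beta n) = al * a * (beta n)^-1 * (den (beta n)^-1)^-1.
  have := beta_gt0 n; have := mode_den_gt0 (beta_gt0 n).
  by rewrite /vweight /den /mode_den => D_gt0 bn_gt0; field; rewrite gt_eqF//= lt0r_neq0//; lra.
under eq_fun do rewrite vE.
have -> : 0 = al * a * 0 * (den 0)^-1 :> R by rewrite mulr0 mul0r.
apply: cvgM; first exact: cvgMr.
by apply: cvgV => //; apply: cvgD; [exact: cvg_cst|exact: cvgMr].
Qed.

End mode_weights.

Section mode_costs.
Variable R : realType.
Implicit Types (a b al beta : R) (g x y : R[i]).

Definition mode_cost a b al beta g x y : R :=
  2^-1 * (a * cabs2 x) + al / 2 * cabs2 (x + y - g) + beta / 2 * (b * cabs2 y).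

Definition mode_energy a al g x : R := 2^-1 * (a * cabs2 x) + al / 2 * cabs2 (x - g).

Lemma mode_cost_ge0 a b al beta g x y : 0 <= a -> 0 <= b -> 0 <= al -> 0 <= beta ->
  0 <= mode_cost a b al beta g x y.
Proof.
move=> a0 b0 al0 beta0; rewrite /mode_cost.
by rewrite !addr_ge0 ?mulr_ge0 ?divr_ge0 ?invr_ge0 ?cabs2_ge0.
Qed.

Lemma mode_cost0_eq0 a b al beta x y : 0 < a -> 0 < b -> 0 <= al -> 0 < beta ->
  mode_cost a b al beta 0 x y = 0 -> x = 0 /\ y = 0.
Proof.
rewrite /mode_cost subr0 => a0 b0 al0 beta0 cost0.
have := mulr_ge0 (ltW a0) (cabs2_ge0 x); have := mulr_ge0 al0 (cabs2_ge0 (x + y)).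
have := mulr_ge0 (ltW beta0) (mulr_ge0 (ltW b0) (cabs2_ge0 y)) => h3 h2 h1.
have /eqP : a * cabs2 x = 0 by lra.
have /eqP : beta * (b * cabs2 y) = 0 by lra.
by rewrite !mulf_eq0 (gt_eqF a0) (gt_eqF b0) (gt_eqF beta0) !cabs2_eq0 => /eqP-> /eqP->.
Qed.

Lemma mode_costE a b al beta g x y : 0 < a -> 0 < b -> 0 < al -> 0 < beta ->
  let X := ((uweight a b al beta)%:C)%C * g in
  let Y := ((vweight a b al beta)%:C)%C * g in
  mode_cost a b al beta g x y =
  mode_cost a b al beta g X Y + mode_cost a b al beta 0 (x - X) (y - Y).
Proof.
move=> a0 b0 al0 beta0; have := lt0r_neq0 (mode_den_gt0 a0 b0 al0 beta0).
rewrite /mode_cost /uweight /vweight /cabs2 /mode_den.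
by case: g x y => [g1 g2] [x1 x2] [y1 y2] /= D0; field.
Qed.

Lemma mode_energyE a al g x : 0 < a -> 0 < al ->
  let X := ((uweight_lim a al)%:C)%C * g in
  mode_energy a al g x = mode_energy a al g X + (a + al) / 2 * cabs2 (x - X).
Proof.
move=> a0 al0; have D0 : a + al != 0 by rewrite gt_eqF ?addr_gt0.
rewrite /mode_energy /uweight_lim /cabs2.
by case: g x => [g1 g2] [x1 x2] /=; field.
Qed.

End mode_costs.

Section torus.
Variables (R : realType) (d : nat).
Local Notation freq := (freq d).
Local Notation coef := (coef R d).
Implicit Types (s x : R) (k : freq) (g u v w : coef).

Definition fpow s k : R := fsq R k `^ s.

Lemma fsq_ge1 k : k != 0 -> 1 <= fsq R k.
Proof.
move=> k_neq0; have [j kj_neq0] : exists j, k ord0 j != 0.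
  apply/existsP; apply: contraNT k_neq0 => /existsPn kj_eq0.
  by apply/eqP/matrixP => i j; rewrite (ord1 i) mxE; exact/eqP/negPn.
rewrite /fsq (bigD1 j)//=; apply: le_trans (_ : _ <= (k ord0 j)%:~R ^+ 2) _.
  by rewrite -real_normK ?realz// exprn_ege1// norm_intr_ge1 ?intr_int// intr_eq0.
by rewrite lerDl sumr_ge0// => i _; exact: sqr_ge0.
Qed.

Lemma fpow_gt0 s k : k != 0 -> 0 < fpow s k.
Proof. by move=> /fsq_ge1 ge1; apply: powR_gt0; exact: lt_le_trans ge1. Qed.

Lemma fpow_le1 s k : s <= 0 -> k != 0 -> fpow s k <= 1.
Proof. by move=> s_le0 /fsq_ge1 ge1; rewrite -(powRr0 (fsq R k)) ler_powR. Qed.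

Lemma cabs2_fraclap s u k : k != 0 ->
  cabs2 (fraclap (s / 2) u k) = fpow s k * cabs2 (u k).
Proof.
move=> /fsq_ge1 ge1; rewrite /fraclap cabs2_scale /fpow expr2 -powRD -?splitr//.
by apply/implyP => _; rewrite gt_eqF// (lt_le_trans _ ge1).
Qed.

Lemma cabs2_Rop s v k : k != 0 -> cabs2 (Rop (s / 2) v k) = fpow s k * cabs2 (v k).
Proof. by move=> k_neq0; rewrite /Rop (negbTE k_neq0) -cabs2_fraclap. Qed.

Lemma torus_c_gt0 : 0 < torus_c R d.
Proof. by rewrite /torus_c invr_gt0 exprn_gt0// mulr_gt0// pi_gt0. Qed.

Lemma in_L2_esum_lty g : in_L2 g -> (\esum_(k in [set: freq]) (cabs2 (g k))%:E < +oo)%E.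
Proof.
rewrite /in_L2 /sqnormL2.
have : (0 <= \esum_(k in [set: freq]) (cabs2 (g k))%:E)%E.
  by apply: esum_EFin_ge0 => k; exact: cabs2_ge0.
case: (\esum_(k in [set: freq]) _) => [r _ _|_|//]; first exact: ltry.
by rewrite gt0_muley ?lte_fin ?torus_c_gt0.
Qed.

Lemma sqnormL2_le u v : (forall k, cabs2 (u k) <= cabs2 (v k)) ->
  (sqnormL2 u <= sqnormL2 v)%E.
Proof.
move=> uv; apply: lee_wpmul2l; first by rewrite lee_fin ltW ?torus_c_gt0.
by apply: le_esum => k _; rewrite lee_fin.
Qed.

Lemma sqnormL2Z x u : 0 <= x ->
  (x%:E * sqnormL2 u = (torus_c R d)%:E * \esum_(k in [set: freq]) (x * cabs2 (u k))%:E)%E.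
Proof. by move=> x0; rewrite /sqnormL2 muleCA esumZl// => k; exact: cabs2_ge0. Qed.

Lemma torus_esumD (f h : freq -> R) : (forall k, 0 <= f k) -> (forall k, 0 <= h k) ->
  ((torus_c R d)%:E * (\esum_(k in [set: freq]) (f k)%:E) +
   (torus_c R d)%:E * (\esum_(k in [set: freq]) (h k)%:E) =
   (torus_c R d)%:E * \esum_(k in [set: freq]) (f k + h k)%:E)%E.
Proof.
by move=> f0 h0; rewrite esum_EFinD// ge0_muleDr ?esum_EFin_ge0.
Qed.

Lemma sobsqE s u : sobsq s u =
  (\esum_(k in [set: freq]) (if k == 0 then 0 else fpow s k * cabs2 (u k))%:E)%E.
Proof.
rewrite /sobsq esum_mkcond; apply: eq_esum => k _.
have -> : (k \in [set k : freq | k != 0]) = (k != 0).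
  by apply/idP/idP => [/set_mem|/mem_set].
by case: eqP.
Qed.

Definition fmult (t : freq -> R) g : coef := fun k => ((t k)%:C)%C * g k.

Lemma innerH_fmult s (t : freq -> R) g (w : coef) : innerH s (fmult t g) w =
  csum (fun k => ((t k)%:C)%C * (if k == 0 then 0 else ((fpow s k)%:C)%C * (g k * (w k)^*%C))).
Proof.
rewrite /innerH; congr csum; apply: funext => k; case: eqP => _; first by rewrite mulr0.
by rewrite /fmult /fpow; ring.
Qed.

Lemma innerL2_fmult (t : freq -> R) g (w : coef) : innerL2 (fmult t g) w =
  ((torus_c R d)%:C)%C * csum (fun k => ((t k)%:C)%C * (g k * (w k)^*%C)).
Proof. by rewrite /innerL2; congr (_ * csum _); apply: funext => k; rewrite mulrA. Qed.

Section fmult_bounds.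
Variables (s C : R) (t : freq -> R) (g : coef).
Hypotheses (C_ge0 : 0 <= C) (t_sqr_le1 : forall k, t k ^+ 2 <= 1)
  (t_sqr_fpow : forall k, k != 0 -> fpow s k * t k ^+ 2 <= C).

Lemma fmult_bounds :
  (sqnormL2 (fmult t g) <= sqnormL2 g)%E /\
  (sobsq s (fmult t g) <= C%:E * \esum_(k in [set: freq]) (cabs2 (g k))%:E)%E.
Proof.
split.
  apply: sqnormL2_le => k; rewrite cabs2_scale -[leRHS]mul1r.
  by rewrite ler_wpM2r ?cabs2_ge0 ?t_sqr_le1.
rewrite -esumZl// => [|k]; last exact: cabs2_ge0.
rewrite sobsqE; apply: le_esum => k _; rewrite lee_fin; case: ifPn => [_|k_neq0].
  by rewrite mulr_ge0 ?cabs2_ge0.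
by rewrite /fpow /fmult cabs2_scale mulrA ler_wpM2r ?cabs2_ge0 ?t_sqr_fpow.
Qed.

Lemma fmult_H0 : in_L2 g -> t 0 = 0 -> H0 s (fmult t g).
Proof.
move=> gL t0; have [L2_le sob_le] := fmult_bounds; split.
- exact: le_lt_trans L2_le gL.
- by rewrite /mean_zero /fmult t0 mul0r.
- apply: le_lt_trans sob_le _; apply: lte_mul_pinfty; rewrite ?lee_fin//.
  exact: in_L2_esum_lty.
Qed.

End fmult_bounds.

End torus.

Section multipliers.
Variables (R : realType) (d : nat) (s1 s2 al : R).
Hypothesis al_gt0 : 0 < al.
Local Notation freq := (freq d).
Implicit Types (k : freq) (beta : R).

Definition umult beta k : R :=
  if k == 0 then 0 else uweight (fpow s1 k) (fpow s2 k) al beta.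
Definition vmult beta k : R :=
  if k == 0 then 0 else vweight (fpow s1 k) (fpow s2 k) al beta.
Definition umult_lim k : R := if k == 0 then 0 else uweight_lim (fpow s1 k) al.

Let sqr_le1 (x : R) : 0 <= x -> x <= 1 -> x ^+ 2 <= 1.
Proof. by move=> x0 x1; rewrite expr_le1. Qed.

Lemma umult_bounds beta k : 0 < beta ->
  [/\ 0 <= umult beta k, umult beta k ^+ 2 <= 1
    & k != 0 -> fpow s1 k * umult beta k ^+ 2 <= al].
Proof.
move=> beta_gt0; rewrite /umult; case: eqP => [_|/eqP k_neq0].
  by split; rewrite ?expr0n.
have [u0 u1 u_fpow] := uweight_bounds (fpow_gt0 s1 k_neq0) (fpow_gt0 s2 k_neq0) al_gt0 beta_gt0.
by rewrite u0 sqr_le1.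
Qed.

Lemma vmult_bounds beta k : 0 < beta -> 0 <= vmult beta k <= 1.
Proof.
move=> beta_gt0; rewrite /vmult; case: eqP => [_|/eqP k_neq0]; first by rewrite lexx ler01.
exact: (vweight_bounds (fpow_gt0 s1 k_neq0) (fpow_gt0 s2 k_neq0) al_gt0 beta_gt0).
Qed.

Lemma fpow_vmult_sqr_le1 beta k : 0 < beta -> s2 <= 0 -> k != 0 ->
  fpow s2 k * vmult beta k ^+ 2 <= 1.
Proof.
move=> beta_gt0 s2_le0 k_neq0; have /andP[v0 v1] := vmult_bounds k beta_gt0.
by rewrite -[leRHS]mul1r ler_pM ?fpow_le1 ?sqr_le1 ?sqr_ge0 ?powR_ge0.
Qed.

Lemma umult_lim_bounds k :
  [/\ 0 <= umult_lim k, umult_lim k ^+ 2 <= 1 & fpow s1 k * umult_lim k ^+ 2 <= al].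
Proof.
rewrite /umult_lim; case: eqP => [_|/eqP k_neq0].
  by rewrite expr0n /= mulr0; split => //; exact: ltW.
have [u0 u1 u_fpow] := uweight_lim_bounds (fpow_gt0 s1 k_neq0) al_gt0.
by rewrite u0 sqr_le1.
Qed.

Section increasing_penalty.
Variable beta : nat -> R.
Hypotheses (beta_gt0 : forall n, 0 < beta n) (beta_nd : nondecreasing_seq beta)
  (beta_cvg : beta @ \oo --> +oo).

Lemma umult_nondecreasing k : nondecreasing_seq (fun n => umult (beta n) k).
Proof.
move=> m n mn; rewrite /umult; case: eqP => // /eqP k_neq0.
by apply: uweight_nondecreasing; rewrite ?fpow_gt0 ?beta_nd.
Qed.

Lemma vmult_nonincreasing k : nonincreasing_seq (fun n => vmult (beta n) k).
Proof.
move=> m n mn; rewrite /vmult; case: eqP => // /eqP k_neq0.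
by apply: vweight_nonincreasing; rewrite ?fpow_gt0 ?beta_nd.
Qed.

Lemma umult_cvg k : umult (beta n) k @[n --> \oo] --> umult_lim k.
Proof.
rewrite /umult /umult_lim; case: eqP => [_|/eqP k_neq0]; first exact: cvg_cst.
by apply: uweight_cvg; rewrite ?fpow_gt0.
Qed.

Lemma vmult_cvg0 k : vmult (beta n) k @[n --> \oo] --> 0.
Proof.
rewrite /vmult; case: eqP => [_|/eqP k_neq0]; first exact: cvg_cst.
by apply: vweight_cvg0; rewrite ?fpow_gt0.
Qed.

End increasing_penalty.

End multipliers.

Section minimizer_I.
Variables (R : realType) (d : nat) (s1 s2 al beta : R) (g : coef R d).
Hypotheses (s2_le0 : s2 <= 0) (al_gt0 : 0 < al) (beta_gt0 : 0 < beta) (gL : in_L2 g).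
Local Notation freq := (freq d).
Local Notation coef := (coef R d).
Implicit Types (k : freq) (u v : coef).

Definition Icost u v k : R := 2^-1 * cabs2 (fraclap (s1 / 2) u k) +
  al / 2 * cabs2 (u k + v k - g k) + beta / 2 * cabs2 (Rop (s2 / 2) v k).

Local Notation uopt := (fmult (umult s1 s2 al beta) g).
Local Notation vopt := (fmult (vmult s1 s2 al beta) g).

Lemma Icost_ge0 u v k : 0 <= Icost u v k.
Proof.
by rewrite /Icost !addr_ge0 ?mulr_ge0 ?divr_ge0 ?invr_ge0 ?cabs2_ge0 ?ltW.
Qed.

Lemma Ibeta_esum u v :
  Ibeta s1 s2 al beta g u v = ((torus_c R d)%:E * \esum_(k in [set: freq]) (Icost u v k)%:E)%E.
Proof.
rewrite /Ibeta !sqnormL2Z ?invr_ge0 ?divr_ge0 ?ltW// !torus_esumD// => k.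
all: by rewrite ?addr_ge0 ?mulr_ge0 ?divr_ge0 ?invr_ge0 ?cabs2_ge0 ?ltW.
Qed.

Lemma Icost_mode u v k : k != 0 ->
  Icost u v k = mode_cost (fpow s1 k) (fpow s2 k) al beta (g k) (u k) (v k).
Proof. by move=> k_neq0; rewrite /Icost cabs2_fraclap// cabs2_Rop. Qed.

(* At k = 0 the junk value 0 `^ (s1 / 2) is harmless because the coefficients vanish. *)
Lemma Icost_at0 u v : mean_zero u -> mean_zero v -> Icost u v 0 = al / 2 * cabs2 (g 0).
Proof.
rewrite /Icost /mean_zero /fraclap /Rop eqxx => -> ->.
by rewrite mulr0 cabs20 !mulr0 add0r addr0 add0r sub0r cabs2N.
Qed.

Lemma Icost_zero k : Icost (fun=> 0) (fun=> 0) k = al / 2 * cabs2 (g k).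
Proof.
by rewrite /Icost /fraclap /Rop !mulr0 if_same cabs20 !mulr0 add0r addr0 add0r sub0r cabs2N.
Qed.

Lemma Icost_opt_le u v k : mean_zero u -> mean_zero v -> Icost uopt vopt k <= Icost u v k.
Proof.
move=> u0 v0; case: (k =P 0) => [->|/eqP k_neq0].
  by rewrite !Icost_at0// /mean_zero /fmult /umult /vmult eqxx mul0r.
rewrite !Icost_mode// (mode_costE _ (u k) (v k)) ?fpow_gt0//.
rewrite /fmult /umult /vmult (negbTE k_neq0) lerDl mode_cost_ge0 ?powR_ge0 ?ltW//.
Qed.

Lemma uopt_H0 : H0 s1 uopt.
Proof.
apply: (fmult_H0 (C := al)) => //; first exact: ltW.
- by move=> k; case: (umult_bounds s1 s2 al_gt0 k beta_gt0).
- by move=> k; case: (umult_bounds s1 s2 al_gt0 k beta_gt0).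
- by rewrite /umult eqxx.
Qed.

Lemma vopt_Hdot_L20 : Hdot_L20 s2 vopt.
Proof.
apply: (fmult_H0 (C := 1)) => //.
- by move=> k; have /andP[v0 v1] := vmult_bounds s1 s2 al_gt0 k beta_gt0; rewrite expr_le1.
- by move=> k; exact: fpow_vmult_sqr_le1.
- by rewrite /vmult eqxx.
Qed.

Lemma minimizes_I_fmult u v : minimizes_I s1 s2 al beta g u v -> u = uopt /\ v = vopt.
Proof.
case=> -[_ u0 _] [_ v0 _] Imin.
have [_ uopt0 _] := uopt_H0; have [_ vopt0 _] := vopt_Hdot_L20.
have opt_fin : (\esum_(k in [set: freq]) (Icost uopt vopt k)%:E < +oo)%E.
  apply: (esum_EFin_lty_le (g := fun k => al / 2 * cabs2 (g k))) => [k _|].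
    rewrite Icost_ge0 -(Icost_zero k) Icost_opt_le//.
  rewrite esumZl ?divr_ge0 ?ltW// => [|k]; last exact: cabs2_ge0.
  by apply: lte_mul_pinfty; rewrite ?lee_fin ?divr_ge0 ?ltW ?in_L2_esum_lty.
have le_opt : (\esum_(k in [set: freq]) (Icost u v k)%:E <=
    \esum_(k in [set: freq]) (Icost uopt vopt k)%:E)%E.
  by have := Imin _ _ uopt_H0 vopt_Hdot_L20; rewrite !Ibeta_esum lee_pmul2l ?lte_fin ?torus_c_gt0.
have opt_bnd k : 0 <= Icost uopt vopt k <= Icost u v k by rewrite Icost_ge0 Icost_opt_le.
have cost_eq := esum_EFin_le_eq opt_bnd le_opt opt_fin.
suff uv_eq k : u k = uopt k /\ v k = vopt k.
  by split; apply: funext => k; case: (uv_eq k).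
case: (k =P 0) => [->|/eqP k_neq0]; first by rewrite u0 v0 uopt0 vopt0.
move: (cost_eq k); rewrite !Icost_mode// /fmult /umult /vmult (negbTE k_neq0).
rewrite (mode_costE _ (u k) (v k)) ?fpow_gt0//.
set E := mode_cost _ _ _ _ 0 _ _ => costE; have E0 : E = 0 by lra.
have [/eqP + /eqP] :=
  mode_cost0_eq0 (fpow_gt0 s1 k_neq0) (fpow_gt0 s2 k_neq0) (ltW al_gt0) beta_gt0 E0.
by rewrite !subr_eq0 => /eqP-> /eqP->.
Qed.

End minimizer_I.

Lemma fmult_umult_vmult_bounded (R : realType) (d : nat) (s1 s2 al : R) (g : coef R d) :
  s2 <= 0 -> 0 < al -> in_L2 g -> exists M : R, forall beta, 0 < beta ->
  [/\ (sqnormL2 (fmult (umult s1 s2 al beta) g) <= M%:E)%E,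
      (sobsq s1 (fmult (umult s1 s2 al beta) g) <= M%:E)%E,
      (sqnormL2 (fmult (vmult s1 s2 al beta) g) <= M%:E)%E &
      (sobsq s2 (fmult (vmult s1 s2 al beta) g) <= M%:E)%E].
Proof.
move=> s2_le0 al_gt0 gL.
have g2_ge0 k : 0 <= cabs2 (g k) by exact: cabs2_ge0.
set G := (\esum_(k in [set: freq d]) (cabs2 (g k))%:E)%E.
have GE : G = (fine G)%:E by rewrite esum_EFin_fineK ?in_L2_esum_lty.
have G_ge0 : 0 <= fine G by rewrite fine_ge0 ?esum_EFin_ge0.
have N_ge0 : (0 <= sqnormL2 g)%E.
  by rewrite mule_ge0 ?esum_EFin_ge0// lee_fin ltW ?torus_c_gt0.
have NE : sqnormL2 g = (fine (sqnormL2 g))%:E by rewrite fineK// ge0_fin_numE.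
have {}N_ge0 : 0 <= fine (sqnormL2 g) by rewrite fine_ge0.
exists (fine (sqnormL2 g) + al * fine G + fine G) => beta beta_gt0.
have aG_ge0 : 0 <= al * fine G := mulr_ge0 (ltW al_gt0) G_ge0.
have u_sqr (k : freq d) : umult s1 s2 al beta k ^+ 2 <= 1.
  by case: (umult_bounds s1 s2 al_gt0 k beta_gt0).
have u_fpow (k : freq d) : k != 0 -> fpow s1 k * umult s1 s2 al beta k ^+ 2 <= al.
  by case: (umult_bounds s1 s2 al_gt0 k beta_gt0).
have v_sqr (k : freq d) : vmult s1 s2 al beta k ^+ 2 <= 1.
  by have /andP[v0 v1] := vmult_bounds s1 s2 al_gt0 k beta_gt0; rewrite expr_le1.
have [uL usob] := fmult_bounds g (ltW al_gt0) u_sqr u_fpow.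
have [vL vsob] := fmult_bounds g ler01 v_sqr (fun k => fpow_vmult_sqr_le1 s1 al_gt0 beta_gt0 s2_le0).
rewrite -/G GE -!EFinM in usob vsob; rewrite mul1r in vsob; rewrite NE in uL vL.
by split; [apply: le_trans uL _|apply: le_trans usob _|apply: le_trans vL _|apply: le_trans vsob _];
  rewrite lee_fin; lra.
Qed.

Section minimizer_E.
Variables (R : realType) (d : nat) (s1 al : R) (g : coef R d).
Hypotheses (al_gt0 : 0 < al) (gL : in_L2 g).
Local Notation freq := (freq d).
Local Notation coef := (coef R d).

Definition Ecost (u : coef) (k : freq) : R :=
  2^-1 * cabs2 (fraclap (s1 / 2) u k) + al / 2 * cabs2 (u k - g k).

Lemma Efun_esum u :
  Efun s1 al g u = ((torus_c R d)%:E * \esum_(k in [set: freq]) (Ecost u k)%:E)%E.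
Proof.
rewrite /Efun !sqnormL2Z ?invr_ge0 ?divr_ge0 ?ltW// torus_esumD// => k.
all: by rewrite mulr_ge0 ?divr_ge0 ?invr_ge0 ?cabs2_ge0 ?ltW.
Qed.

Lemma minimizes_E_fmult : minimizes_E s1 al g (fmult (umult_lim s1 al) g).
Proof.
split.
  apply: (fmult_H0 (C := al)) => //; first exact: ltW.
  - by move=> k; case: (umult_lim_bounds s1 al_gt0 k).
  - by move=> k; case: (umult_lim_bounds s1 al_gt0 k).
  - by rewrite /umult_lim eqxx.
move=> u [_ u0 _]; rewrite !Efun_esum; apply: lee_wpmul2l.
  by rewrite lee_fin ltW ?torus_c_gt0.
apply: le_esum => k _; rewrite lee_fin /Ecost.
case: (k =P 0) => [->|/eqP k_neq0].
  by rewrite /fraclap u0 /fmult /umult_lim eqxx !mul0r mulr0.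
rewrite !cabs2_fraclap// /fmult /umult_lim (negbTE k_neq0).
have := mode_energyE (g k) (u k) (fpow_gt0 s1 k_neq0) al_gt0; rewrite /mode_energy => ->.
by rewrite lerDl mulr_ge0 ?cabs2_ge0 ?divr_ge0 ?addr_ge0 ?powR_ge0 ?ltW.
Qed.

End minimizer_E.

Section weak_limits.
Variables (R : realType) (d : nat) (s1 s2 al : R) (g : coef R d) (beta : nat -> R).
Hypotheses (al_gt0 : 0 < al) (gL : in_L2 g) (beta_gt0 : forall n, 0 < beta n)
  (beta_nd : nondecreasing_seq beta) (beta_cvg : beta @ \oo --> +oo).
Local Notation freq := (freq d).
Local Notation coef := (coef R d).

Lemma weak_H0_fmult_umult :
  weak_H0 s1 (fun n => fmult (umult s1 s2 al (beta n)) g) (fmult (umult_lim s1 al) g).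
Proof.
move=> w [_ _ w_sob]; under eq_fun do rewrite innerH_fmult; rewrite innerH_fmult.
pose z k := if k == 0 then 0 else ((fpow s1 k)%:C)%C * (g k * (w k)^*%C).
pose B k := 2^-1 * (al * cabs2 (g k) + (if k == 0 then 0 else fpow s1 k * cabs2 (w k))).
have sob_ge0 k : 0 <= if k == 0 then 0 else fpow s1 k * cabs2 (w k).
  by case: eqP; rewrite ?mulr_ge0 ?powR_ge0 ?cabs2_ge0.
have gal_ge0 k : 0 <= al * cabs2 (g k) by rewrite mulr_ge0 ?cabs2_ge0 ?ltW.
have B_fin : (\esum_(k in [set: freq]) (B k)%:E < +oo)%E.
  rewrite esumZl ?esum_EFinD ?invr_ge0// => [|k]; last by rewrite addr_ge0.
  apply: lte_mul_pinfty => //; apply: lte_add_pinfty; last by rewrite -sobsqE.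
  rewrite esumZl ?ltW// => [|k]; last exact: cabs2_ge0.
  by apply: lte_mul_pinfty; rewrite ?lee_fin ?ltW ?in_L2_esum_lty.
have z_dom k : umult_lim s1 al k * `|complex.Re (z k)| <= B k /\
               umult_lim s1 al k * `|complex.Im (z k)| <= B k.
  rewrite /z /B; case: eqP => [_|/eqP k_neq0].
    by split; rewrite /= normr0 mulr0 addr0 mulr_ge0 ?invr_ge0.
  have [u0 _ u_fpow] := umult_lim_bounds s1 al_gt0 k.
  by rewrite ![2^-1 * _]mulrC; apply: scaled_mul_conj_le; rewrite ?powR_ge0.
apply: (@csum_weighted_nondecreasing_ccvg _ _ _ _ z) => [n k|k|k||].
- by case: (umult_bounds s1 s2 al_gt0 k (beta_gt0 n)).
- exact: umult_nondecreasing.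
- exact: umult_cvg.
- apply: esum_EFin_lty_le B_fin => k _; rewrite (z_dom k).1 mulr_ge0//.
  by case: (umult_lim_bounds s1 al_gt0 k).
- apply: esum_EFin_lty_le B_fin => k _; rewrite (z_dom k).2 mulr_ge0//.
  by case: (umult_lim_bounds s1 al_gt0 k).
Qed.

Lemma weak_L20_fmult_vmult :
  weak_L20 (fun n => fmult (vmult s1 s2 al (beta n)) g) (fun=> 0).
Proof.
move=> w wL _; have -> : (fun=> 0) = fmult (fun=> 0) g.
  by apply: funext => k; rewrite /fmult mul0r.
under eq_fun do rewrite innerL2_fmult; rewrite innerL2_fmult; apply: ccvg_scale.
pose B k := 2^-1 * (cabs2 (g k) + cabs2 (w k)).
have B_fin : (\esum_(k in [set: freq]) (B k)%:E < +oo)%E.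
  rewrite esumZl ?invr_ge0// => [|k]; last by rewrite addr_ge0 ?cabs2_ge0.
  rewrite esum_EFinD => [|k|k]; rewrite ?cabs2_ge0//.
  by apply: lte_mul_pinfty => //; apply: lte_add_pinfty; exact: in_L2_esum_lty.
have v0_bounds (k : freq) : 0 <= vmult s1 s2 al (beta 0) k <= 1.
  exact: vmult_bounds.
have z_dom k : vmult s1 s2 al (beta 0) k * `|complex.Re (g k * (w k)^*%C)| <= B k /\
               vmult s1 s2 al (beta 0) k * `|complex.Im (g k * (w k)^*%C)| <= B k.
  have /andP[v0 v1] := v0_bounds k.
  have := @scaled_mul_conj_le _ 1 1 _ (g k) (w k) ler01 v0.
  by rewrite Re_scale Im_scale !mul1r /B ![2^-1 * _]mulrC; apply; rewrite expr_le1.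
apply: csum_weighted_nonincreasing_ccvg => [n k|k|k||].
- by case/andP: (vmult_bounds s1 s2 al_gt0 k (beta_gt0 n)).
- exact: vmult_nonincreasing.
- exact: vmult_cvg0.
- apply: esum_EFin_lty_le B_fin => k _; rewrite (z_dom k).1 mulr_ge0//.
  by case/andP: (v0_bounds k).
- apply: esum_EFin_lty_le B_fin => k _; rewrite (z_dom k).2 mulr_ge0//.
  by case/andP: (v0_bounds k).
Qed.

End weak_limits.

Theorem lemma7 (R : realType) (d : nat) (s1 s2 alpha : R) (g : coef R d)
  (uB vB : R -> coef R d) (beta : nat -> R) :
  (1 <= d)%N -> 0 <= s1 -> s2 <= 0 -> 0 < alpha -> in_L2 g ->
  (forall b : R, 0 < b -> minimizes_I s1 s2 alpha b g (uB b) (vB b)) ->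
  (forall n, 0 < beta n) -> (forall n, beta n < beta n.+1) ->
  beta @ \oo --> +oo ->
  (exists M : R, forall n,
      [/\ (sqnormL2 (uB (beta n)) <= M%:E)%E, (sobsq s1 (uB (beta n)) <= M%:E)%E,
          (sqnormL2 (vB (beta n)) <= M%:E)%E & (sobsq s2 (vB (beta n)) <= M%:E)%E])
  /\
  exists phi : nat -> nat, (forall n, (phi n < phi n.+1)%N) /\
  exists u0 : coef R d,
    [/\ minimizes_E s1 alpha g u0,
        weak_H0 s1 (fun n => uB (beta (phi n))) u0 &
        weak_L20 (fun n => vB (beta (phi n))) (fun _ => 0)].
Proof.
move=> _ _ s2_le0 al_gt0 gL minI beta_gt0 beta_lt beta_cvg.
have beta_nd : nondecreasing_seq beta by apply/nondecreasing_seqP => n; exact: ltW.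
have opt n := minimizes_I_fmult s2_le0 al_gt0 (beta_gt0 n) gL (minI _ (beta_gt0 n)).
split.
  have [M M_bnd] := fmult_umult_vmult_bounded s1 s2_le0 al_gt0 gL.
  by exists M => n; case: (opt n) => -> ->; exact: M_bnd.
exists id; split => //; exists (fmult (umult_lim s1 alpha) g); split.
- exact: minimizes_E_fmult.
- have -> : (fun n => uB (beta n)) = fun n => fmult (umult s1 s2 alpha (beta n)) g.
    by apply: funext => n; case: (opt n).
  exact: weak_H0_fmult_umult.
- have -> : (fun n => vB (beta n)) = fun n => fmult (vmult s1 s2 alpha (beta n)) g.
    by apply: funext => n; case: (opt n).
  exact: weak_L20_fmult_vmult.
Qed.
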